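(* Let $m < n$ be positive integers. If the $m \times n$ Domineering board has outcome ${\rm 2nd}$ or $V$, then the $(n-m) \times n$ board does not have outcome $V$.
   Context: Domineering on an $a \times b$ board (a rectangle of $a$ rows and $b$ columns of unit cells): two players, Vera and Hepzibah, alternately place dominoes on empty cells; Vera places vertical dominoes (covering two vertically adjacent empty cells), Hepzibah places horizontal dominoes (covering two horizontally adjacent empty cells). A player who cannot move on her turn loses. The outcome class is $V$ if Vera wins with optimal play regardless of who moves first, $H$ if Hepzibah wins regardless of who moves first, ${\rm 1st}$ if the first player wins, and ${\rm 2nd}$ if the second player wins. *)

From mathcomp Require Import all_boot.
Set Implicit Arguments. Unset Strict Implicit. Unset Printing Implicit Defensive.

(* A cell is (row, column) : 'I_a * 'I_b.  A position is the set of EMPTY cells.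
   Player [true] = Vera (vertical dominoes), [false] = Hepzibah (horizontal). *)
Section Domineering.
Variables a b : nat.
Definition cell := ('I_a * 'I_b)%type.

Definition domino (p : bool) (x y : cell) : bool :=
  if p then (val x.2 == val y.2) && ((val x.1).+1 == val y.1)
  else (val x.1 == val y.1) && ((val x.2).+1 == val y.2).

(* Fuel k bounds the game length; it is exact once k exceeds the number of
   remaining moves. *)
Fixpoint wins_fuel (k : nat) (p : bool) (S : {set cell}) : bool :=
  if k is k'.+1 then
    [exists x : cell, exists y : cell,
      [&& domino p x y, x \in S, y \in S & ~~ wins_fuel k' (~~ p) (S :\ x :\ y)]]
  else false.

(* each move removes two cells, so #|cell|.+1 moves of fuel is ample *)
Definition wins (p : bool) (S : {set cell}) : bool := wins_fuel #|[set: cell]|.+1 p S.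

Definition vera_first_wins : bool := wins true setT.
Definition hep_first_wins : bool := wins false setT.
End Domineering.

Inductive outcome := OutV | OutH | OutFirst | OutSecond.

Definition outcome_of (a b : nat) : outcome :=
  match vera_first_wins a b, hep_first_wins a b with
  | true, false => OutV
  | false, true => OutH
  | true, true => OutFirst
  | false, false => OutSecond
  end.

From mathcomp Require Import all_boot.
Set Implicit Arguments. Unset Strict Implicit. Unset Printing Implicit Defensive.

(** Stack the m x n board on top of the (n - m) x n board to get the n x n
    board.  A horizontal domino never crosses the seam, so Hepzibah's moves on
    the square are moves in one of the two halves, while Vera may, but need
    not, play across it.  Hence if Hepzibah loses moving first on both halves
    she loses moving first on the square, and if in addition Vera wins moving
    first on the lower half she wins moving first on the square.  Transposing
    the square swaps the two players, so on the square Vera wins moving first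
    exactly when Hepzibah does: contradiction. *)

Lemma card_setD1D1_lt (T : finType) (S : {set T}) x y :
  x \in S -> #|S :\ x :\ y| < #|S|.
Proof.
move=> Sx; rewrite (cardsD1 x S) Sx add1n ltnS.
exact/subset_leq_card/subD1set.
Qed.

Section Wins.
Variables a b : nat.
Implicit Types (p : bool) (S : {set cell a b}).

Lemma wins_fuel_stable k k' p S :
  #|S| < k -> #|S| < k' -> wins_fuel k p S = wins_fuel k' p S.
Proof.
elim: k k' p S => [|k IHk] [|k'] p S //= Sk Sk'.
apply: eq_existsb => x; apply: eq_existsb => y.
case Sx: (x \in S); last by rewrite !andbF.
have SxyS := card_setD1D1_lt y Sx.
by rewrite (IHk k') // (leq_trans SxyS).
Qed.

Lemma wins_fuelE k p S : #|S| < k -> wins p S = wins_fuel k p S.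
Proof.
move=> Sk; apply: wins_fuel_stable Sk.
by rewrite ltnS subset_leq_card ?subsetT.
Qed.

Lemma winsP p S :
  reflect (exists x, exists y,
             [/\ domino p x y, x \in S, y \in S & ~~ wins (~~ p) (S :\ x :\ y)])
          (wins p S).
Proof.
rewrite (wins_fuelE p (ltnSn #|S|)) /=.
apply: (iffP existsP) => [[x /existsP [y /and4P [pxy Sx Sy]]] | [x [y [pxy Sx Sy lost]]]].
- rewrite -wins_fuelE; last exact: card_setD1D1_lt.
  by move=> lost; exists x, y.
- rewrite (wins_fuelE _ (card_setD1D1_lt y Sx)) in lost.
  by exists x; apply/existsP; exists y; rewrite pxy Sx Sy.
Qed.

Lemma losing_move p S x y : ~~ wins p S ->
  domino p x y -> x \in S -> y \in S -> wins (~~ p) (S :\ x :\ y).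
Proof.
move=> lost pxy Sx Sy; apply: contraNT lost => won.
by apply/winsP; exists x, y.
Qed.

End Wins.

Section Transpose.

Definition transpose_cell {a b} (c : cell a b) : cell b a := (c.2, c.1).

Lemma transpose_cellK a b : cancel (@transpose_cell a b) (@transpose_cell b a).
Proof. by case. Qed.

Variables a b : nat.

Definition transpose (S : {set cell a b}) : {set cell b a} := transpose_cell @: S.

Lemma mem_transpose (S : {set cell a b}) c :
  (c \in transpose S) = (transpose_cell c \in S).
Proof.
by rewrite /transpose (can2_imset_pre _ (@transpose_cellK _ _) (@transpose_cellK _ _)) inE.
Qed.

Lemma card_transpose (S : {set cell a b}) : #|transpose S| = #|S|.
Proof. exact/card_imset/can_inj/transpose_cellK. Qed.

Lemma transpose_setD1D1 (S : {set cell a b}) x y :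
  transpose (S :\ x :\ y) = transpose S :\ transpose_cell x :\ transpose_cell y.
Proof.
apply/setP => c; rewrite mem_transpose !inE mem_transpose.
by rewrite -!(can2_eq (@transpose_cellK _ _) (@transpose_cellK _ _)).
Qed.

Lemma transpose_setT : transpose [set: cell a b] = setT.
Proof. by apply/setP => c; rewrite mem_transpose !inE. Qed.

Lemma domino_transpose p (x y : cell a b) :
  domino (~~ p) (transpose_cell x) (transpose_cell y) = domino p x y.
Proof. by case: p. Qed.

End Transpose.

Lemma wins_fuel_transpose a b k p (S : {set cell a b}) :
  wins_fuel k p S = wins_fuel k (~~ p) (transpose S).
Proof.
elim: k p S => [|k IHk] p S //=.
apply/existsP/existsP => [[x /existsP [y /and4P [pxy Sx Sy lost]]]
                         | [x' /existsP [y' /and4P [pxy Sx Sy lost]]]].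
- exists (transpose_cell x); apply/existsP; exists (transpose_cell y).
  rewrite domino_transpose !mem_transpose !transpose_cellK pxy Sx Sy.
  by rewrite -transpose_setD1D1 -IHk.
- exists (transpose_cell x'); apply/existsP; exists (transpose_cell y').
  rewrite -(domino_transpose p) !transpose_cellK.
  rewrite !mem_transpose in Sx Sy.
  by rewrite pxy Sx Sy IHk transpose_setD1D1 !transpose_cellK.
Qed.

Lemma wins_transpose a b p (S : {set cell a b}) : wins p S = wins (~~ p) (transpose S).
Proof.
have SS : #|S| < #|S|.+1 by [].
by rewrite (wins_fuelE p SS) wins_fuel_transpose -wins_fuelE ?card_transpose.
Qed.

Lemma square_vera_first_winsE n : vera_first_wins n n = hep_first_wins n n.
Proof. by rewrite /vera_first_wins wins_transpose transpose_setT. Qed.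

Section Stack.
Variables a1 a2 b : nat.

Definition top_cell (c : cell a1 b) : cell (a1 + a2) b := (lshift a2 c.1, c.2).
Definition bot_cell (c : cell a2 b) : cell (a1 + a2) b := (rshift a1 c.1, c.2).

Definition stack (G : {set cell a1 b}) (H : {set cell a2 b}) : {set cell (a1 + a2) b} :=
  top_cell @: G :|: bot_cell @: H.

Lemma top_cell_inj : injective top_cell.
Proof. by case=> [i j] [i' j'] [/val_inj -> ->]. Qed.

Lemma bot_cell_inj : injective bot_cell.
Proof. by case=> [i j] [i' j'] [/addnI/val_inj -> ->]. Qed.

Lemma top_bot_cell_neq x y : top_cell x != bot_cell y.
Proof. by rewrite xpair_eqE eq_lrshift. Qed.

Lemma top_or_bot_cell (c : cell (a1 + a2) b) :
  (exists x, c = top_cell x) \/ (exists y, c = bot_cell y).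
Proof.
case: c => i j; case: (splitP i) => [i' Ei | i' Ei].
- by left; exists (i', j); congr pair; apply: val_inj.
- by right; exists (i', j); congr pair; apply: val_inj.
Qed.

Lemma mem_stack_top G H x : (top_cell x \in stack G H) = (x \in G).
Proof.
have /negPf bot_x : top_cell x \notin bot_cell @: H.
  by apply/imsetP => -[y _ /eqP]; rewrite (negPf (top_bot_cell_neq _ _)).
by rewrite in_setU bot_x orbF mem_imset //; apply: top_cell_inj.
Qed.

Lemma mem_stack_bot G H y : (bot_cell y \in stack G H) = (y \in H).
Proof.
have /negPf top_y : bot_cell y \notin top_cell @: G.
  by apply/imsetP => -[x _ /eqP]; rewrite eq_sym (negPf (top_bot_cell_neq _ _)).
by rewrite in_setU top_y mem_imset //; apply: bot_cell_inj.
Qed.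

Lemma stack_setT : stack [set: cell a1 b] [set: cell a2 b] = setT.
Proof.
apply/setP => c; rewrite in_setT.
by case: (top_or_bot_cell c) => -[d ->]; rewrite ?mem_stack_top ?mem_stack_bot in_setT.
Qed.

Lemma stack_setD1D1_top G H x y :
  stack G H :\ top_cell x :\ top_cell y = stack (G :\ x :\ y) H.
Proof.
apply/setP => c; case: (top_or_bot_cell c) => -[d ->].
- by rewrite !in_setD1 !(inj_eq top_cell_inj) !mem_stack_top !in_setD1.
- rewrite !in_setD1 ![bot_cell d == _]eq_sym !(negPf (top_bot_cell_neq _ _)).
  by rewrite !mem_stack_bot.
Qed.

Lemma stack_setD1D1_bot G H x y :
  stack G H :\ bot_cell x :\ bot_cell y = stack G (H :\ x :\ y).
Proof.
apply/setP => c; case: (top_or_bot_cell c) => -[d ->].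
- by rewrite !in_setD1 !(negPf (top_bot_cell_neq _ _)) !mem_stack_top.
- by rewrite !in_setD1 !(inj_eq bot_cell_inj) !mem_stack_bot !in_setD1.
Qed.

Lemma domino_top p x y : domino p (top_cell x) (top_cell y) = domino p x y.
Proof. by case: p. Qed.

Lemma domino_bot p x y : domino p (bot_cell x) (bot_cell y) = domino p x y.
Proof. by case: p => /=; rewrite -?addnS !eqn_add2l. Qed.

Lemma stack_hdominoP (x y : cell (a1 + a2) b) : domino false x y ->
  (exists x' y', [/\ x = top_cell x', y = top_cell y' & domino false x' y']) \/
  (exists x' y', [/\ x = bot_cell x', y = bot_cell y' & domino false x' y']).
Proof.
case: (top_or_bot_cell x) => -[x' ->]; case: (top_or_bot_cell y) => -[y' ->].
- by rewrite domino_top => x'y'; left; exists x', y'.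
- move=> /andP [/= /eqP x'y' _]; have := ltn_ord x'.1.
  by rewrite x'y' ltnNge leq_addr.
- move=> /andP [/= /eqP x'y' _]; have := ltn_ord y'.1.
  by rewrite -x'y' ltnNge leq_addr.
- by rewrite domino_bot => x'y'; right; exists x', y'.
Qed.

(* Vera answers a move in one half by a move in the same half, so the three
   claims feed each other and are proved by a single induction. *)
Lemma stack_wins k G H : #|stack G H| < k ->
  [/\ (~~ wins false G -> ~~ wins false H -> ~~ wins false (stack G H)),
      (wins true G -> ~~ wins false H -> wins true (stack G H)) &
      (~~ wins false G -> wins true H -> wins true (stack G H))].
Proof.
elim: k G H => [|k IHk] G H // GHk; split.
- move=> G_lost H_lost; apply/winsP => -[x [y [xy GHx GHy won]]].
  have small := leq_trans (card_setD1D1_lt y GHx) GHk.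
  case: (stack_hdominoP xy) => -[x' [y' [-> -> x'y']]] in GHx GHy won small *.
  + rewrite stack_setD1D1_top in won small; rewrite !mem_stack_top in GHx GHy.
    have [_ vera_wins _] := IHk _ _ small.
    by rewrite vera_wins ?(losing_move G_lost) in won.
  + rewrite stack_setD1D1_bot in won small; rewrite !mem_stack_bot in GHx GHy.
    have [_ _ vera_wins] := IHk _ _ small.
    by rewrite vera_wins ?(losing_move H_lost) in won.
- move=> /winsP [x [y [xy Gx Gy lost]]] H_lost; apply/winsP.
  exists (top_cell x), (top_cell y).
  have small : #|stack (G :\ x :\ y) H| < k.
    rewrite -stack_setD1D1_top; apply: leq_trans (card_setD1D1_lt _ _) GHk.
    by rewrite mem_stack_top.
  have [hep_loses _ _] := IHk _ _ small.
  by rewrite domino_top !mem_stack_top stack_setD1D1_top hep_loses.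
- move=> G_lost /winsP [x [y [xy Hx Hy lost]]]; apply/winsP.
  exists (bot_cell x), (bot_cell y).
  have small : #|stack G (H :\ x :\ y)| < k.
    rewrite -stack_setD1D1_bot; apply: leq_trans (card_setD1D1_lt _ _) GHk.
    by rewrite mem_stack_bot.
  have [hep_loses _ _] := IHk _ _ small.
  by rewrite domino_bot !mem_stack_bot stack_setD1D1_bot hep_loses.
Qed.

End Stack.

Lemma stack_hep_first_loses a1 a2 b (G : {set cell a1 b}) (H : {set cell a2 b}) :
  ~~ wins false G -> ~~ wins false H -> ~~ wins false (stack G H).
Proof. by have [] := stack_wins (ltnSn #|stack G H|). Qed.

Lemma stack_vera_first_wins a1 a2 b (G : {set cell a1 b}) (H : {set cell a2 b}) :
  ~~ wins false G -> wins true H -> wins true (stack G H).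
Proof. by have [] := stack_wins (ltnSn #|stack G H|). Qed.

Lemma outcome_VP a b :
  outcome_of a b = OutV -> vera_first_wins a b /\ ~~ hep_first_wins a b.
Proof. by rewrite /outcome_of; case: vera_first_wins; case: hep_first_wins. Qed.

Lemma outcome_hep_first_loses a b :
  outcome_of a b = OutSecond \/ outcome_of a b = OutV -> ~~ hep_first_wins a b.
Proof. by rewrite /outcome_of; case: vera_first_wins; case: hep_first_wins => // -[]. Qed.

Theorem mainTheorem12 (m n : nat) :
  0 < m -> m < n ->
  (outcome_of m n = OutSecond \/ outcome_of m n = OutV) ->
  outcome_of (n - m) n <> OutV.
Proof.
move=> _ /ltnW le_mn /outcome_hep_first_loses top_lost.
rewrite -(subnKC le_mn) addKn in top_lost * => /outcome_VP [bot_won bot_lost].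
have square_won := stack_vera_first_wins top_lost bot_won.
have square_lost := stack_hep_first_loses top_lost bot_lost.
rewrite stack_setT in square_won square_lost.
have := square_vera_first_winsE (m + (n - m)).
by rewrite /vera_first_wins /hep_first_wins square_won (negPf square_lost).
Qed.
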